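(* For any infinite cardinality $\kappa$, $\Delta_{c_0(\kappa)}^{(c)}(R)=2R$ for all $R\in[0,\infty)$.
   Context: For a cardinal $\kappa$, $c_0(\kappa)$ is the space of real families $(x_\xi)_{\xi<\kappa}$ such that $\{\xi: |x_\xi|>\eta\}$ is finite for every $\eta>0$, with the sup norm. For a metric space $X$ and a cover $\mathcal{U}$ of $X$: $\mathrm{diam}(\mathcal{U})=\sup_{U\in\mathcal{U}}\mathrm{diam}(U)$; $\mathcal{L}(\mathcal{U})=\sup\{d\in[0,\infty): \text{every } E\subseteq X \text{ with } \mathrm{diam}(E)<d \text{ is contained in some } U\in\mathcal{U}\}$; $\mathcal{U}$ is point-finite if each point lies in only finitely many members. $\Delta_X^{(c)}(R)=\inf\{\mathrm{diam}(\mathcal{U}): \mathcal{U} \text{ a point-finite cover of } X,\ \mathcal{L}(\mathcal{U})\geq R\}$. *)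

From HB Require Import structures.
From mathcomp Require Import all_boot all_order all_algebra.
From mathcomp Require Import all_classical all_reals ereal.
Set Implicit Arguments. Unset Strict Implicit. Unset Printing Implicit Defensive.
Import Order.TTheory GRing.Theory Num.Theory.
Local Open Scope classical_set_scope.
Local Open Scope ring_scope.

Section C0.
Variables (R : realType) (K : Type).

Definition c0 : set (K -> R) :=
  [set x | forall eta : R, 0 < eta -> finite_set [set k | eta < `|x k|]].

Definition c0_dist (x y : K -> R) : \bar R :=
  ereal_sup [set (`|x k - y k|)%:E | k in [set: K]].

(* diameter of a subset; convention diam(empty) = 0 *)
Definition diam (E : set (K -> R)) : \bar R :=
  ereal_sup (0%:E |` [set c0_dist x y | x in E & y in E]).

Definition is_cover (U : set (set (K -> R))) : Prop :=
  (forall A, U A -> A `<=` c0) /\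
  (forall x, c0 x -> exists A, U A /\ A x).

Definition point_finite (U : set (set (K -> R))) : Prop :=
  forall x, c0 x -> finite_set [set A | U A /\ A x].

Definition cover_diam (U : set (set (K -> R))) : \bar R :=
  ereal_sup [set diam A | A in U].

Definition lebesgue_number (U : set (set (K -> R))) : \bar R :=
  ereal_sup [set d%:E | d in [set d : R | 0 <= d /\
     forall E, E `<=` c0 -> (diam E < d%:E)%E -> exists A, U A /\ E `<=` A]].

Definition Delta_c (r : R) : \bar R :=
  ereal_inf [set cover_diam U | U in
     [set U | is_cover U /\ point_finite U /\ (r%:E <= lebesgue_number U)%E]].

End C0.

From HB Require Import structures.
From mathcomp Require Import all_boot all_order all_algebra.
From mathcomp Require Import all_classical all_reals ereal.
From mathcomp Require Import lra.

(* Upper bound: for e > 0, the boxes prod_k S_k, where each S_k is either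
   [-(e + r), e + r] or one of the slabs +-[(n+1)e, (n+2)e + 2r], cover c0(K)
   with diameter 2r + 2e and Lebesgue number r, since consecutive slabs
   overlap by 2r.  They are point-finite: a slab stays at distance e from 0, a
   point of c0(K) has only finitely many coordinates of size >= e, and each
   coordinate lies in finitely many slabs.
   Lower bound: if U is point-finite with Lebesgue number > s, each cube
   [0, s]^K - s e_k lies in a member of U, which contains 0.  As K is infinite
   and only finitely many members contain 0, two cubes k1 <> k2 lie in the
   same member; it contains s e_k2 and -s e_k2, so its diameter is >= 2s. *)

Set Implicit Arguments.
Unset Strict Implicit.
Unset Printing Implicit Defensive.
Import Order.TTheory GRing.Theory Num.Theory.
Local Open Scope classical_set_scope.
Local Open Scope ring_scope.

Lemma infinite_pigeonhole T U (A : set U) (f : T -> U) :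
  infinite_set [set: T] -> finite_set A -> (forall t, A (f t)) ->
  exists t1 t2, t1 <> t2 /\ f t1 = f t2.
Proof.
move=> Tinf Afin fA; apply: contrapT => noncoll; apply: Tinf.
have f_inj : {in f @^-1` A &, injective f}.
  by move=> t1 t2 _ _ ft; apply: contrapT => t12; apply: noncoll; exists t1, t2.
by apply: (sub_finite_set _ (finite_preimage f_inj Afin)) => t _; apply: fA.
Qed.

Lemma finite_set_funs_in (I : eqType) (X : Type) (s : seq I) (S : I -> set X) (d : X) :
  (forall i, finite_set (S i)) -> (forall i, i \notin s -> S i `<=` [set d]) ->
  finite_set [set f : I -> X | forall i, S i (f i)].
Proof.
elim: s S => [|a s IH] S Sfin Sd.
  apply: (sub_finite_set _ (finite_set1 (fun=> d))) => f /= Sf.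
  by apply: funext => i; have := Sd i _ _ (Sf i); apply.
pose S' i := if i == a then [set d] else S i.
have S'fin : finite_set [set f : I -> X | forall i, S' i (f i)].
  apply: IH => [i|i i_s]; rewrite /S'; case: ifPn => // ia; first exact: subset_refl.
  by apply: Sd; rewrite in_cons negb_or ia.
pose update (v : X) (f : I -> X) i := if i == a then v else f i.
apply: (@sub_finite_set _ _ (\bigcup_(v in S a) (update v @` [set f | forall i, S' i (f i)]))).
  move=> f /= Sf; exists (f a) => //; exists (update d f).
    by move=> i; rewrite /S' /update; case: ifP.
  by apply: funext => i; rewrite /update; case: eqVneq => [->|].
by apply: bigcup_finite => // v _; apply: finite_image.
Qed.

Section C0Covers.
Variables (R : realType) (K : Type).
Implicit Types (x y : K -> R) (E A : set (K -> R)) (U : set (set (K -> R))).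

Lemma diam_ge0 E : (0 <= diam E)%E.
Proof. by apply: ereal_sup_ubound; left. Qed.

Lemma coord_le_diam E x y k : E x -> E y -> ((`|x k - y k|)%:E <= diam E)%E.
Proof.
move=> Ex Ey; apply: (@le_trans _ _ (c0_dist x y)).
  by apply: ereal_sup_ubound; exists k.
by apply: ereal_sup_ubound; right; exists x => //; exists y.
Qed.

Lemma diam_le E (s : R) : 0 <= s ->
  (forall x y k, E x -> E y -> `|x k - y k| <= s) -> (diam E <= s%:E)%E.
Proof.
move=> s0 Es; apply/ereal_supP => _ [->|[x Ex [y Ey <-]]]; first by rewrite lee_fin.
by apply/ereal_supP => _ [k _ <-]; rewrite lee_fin; apply: Es.
Qed.

Lemma diam_le_cover_diam U A : U A -> (diam A <= cover_diam U)%E.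
Proof. by move=> UA; apply: ereal_sup_ubound; exists A. Qed.

Lemma c0_zero : c0 (fun _ : K => 0 : R).
Proof.
move=> eta eta0; apply: (sub_finite_set _ (finite_set0 _)) => k /=.
by rewrite normr0 ltNge ltW.
Qed.

Lemma cover_diam_ge0 U : is_cover U -> (0 <= cover_diam U)%E.
Proof.
case=> _ /(_ _ c0_zero) [A [UA _]].
exact: le_trans (diam_ge0 A) (diam_le_cover_diam UA).
Qed.

Lemma lebesgue_number_gt_sub U E (s : R) : (s%:E < lebesgue_number U)%E ->
  E `<=` @c0 R K -> (diam E <= s%:E)%E -> exists A, U A /\ E `<=` A.
Proof.
case/ereal_sup_gt => _ [d [_ Ud] <-]; rewrite lte_fin => sd Ec Es.
by apply: Ud => //; apply: le_lt_trans Es _; rewrite lte_fin.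
Qed.

Lemma le_lebesgue_number U (r : R) : 0 <= r ->
  (forall E, E `<=` @c0 R K -> (forall x y k, E x -> E y -> `|x k - y k| <= r) ->
     exists A, U A /\ E `<=` A) ->
  (r%:E <= lebesgue_number U)%E.
Proof.
move=> r0 Ur; apply: ereal_sup_ubound; exists r => //; split => // E Ec Er.
apply: Ur => // x y k Ex Ey; rewrite -lee_fin.
exact/ltW/(le_lt_trans (coord_le_diam k Ex Ey) Er).
Qed.

Definition basis_vec (j : K) (c : R) : K -> R := fun i => if `[< i = j >] then c else 0.

Lemma basis_vec_eq j c : basis_vec j c j = c.
Proof. by rewrite /basis_vec asboolT. Qed.

Lemma basis_vec_neq c i j : i <> j -> basis_vec j c i = 0.
Proof. by move=> ij; rewrite /basis_vec asboolF. Qed.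

Lemma c0_basis_vec j c : c0 (basis_vec j c).
Proof.
move=> eta eta0; apply: (sub_finite_set _ (finite_set1 j)) => i /=.
by apply: contraPP => ij; rewrite basis_vec_neq // normr0 ltNge ltW.
Qed.

Definition shifted_cube (s : R) (k : K) : set (K -> R) :=
  [set v | c0 v /\ forall i, 0 <= v i + basis_vec k s i <= s].

Section ShiftedCube.
Variables (s : R) (k : K).
Hypothesis s0 : 0 <= s.

Lemma diam_shifted_cube : (diam (shifted_cube s k) <= s%:E)%E.
Proof.
apply: diam_le => // x y i [_ /(_ i) xi] [_ /(_ i) yi].
rewrite (_ : x i - y i = (x i + basis_vec k s i) - (y i + basis_vec k s i)); last lra.
by rewrite ler_norml; move: xi yi => /andP[? ?] /andP[? ?]; apply/andP; split; lra.
Qed.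

Lemma zero_in_shifted_cube : shifted_cube s k (fun=> 0).
Proof.
split=> [|i]; first exact: c0_zero.
rewrite /= add0r; have [-> | ik] := pselect (i = k).
  by rewrite basis_vec_eq lexx s0.
by rewrite basis_vec_neq // lexx s0.
Qed.

Lemma basis_vec_in_shifted_cube j : j <> k -> shifted_cube s k (basis_vec j s).
Proof.
move=> jk; split=> [|i]; first exact: c0_basis_vec.
have [-> | ik] := pselect (i = k).
  by rewrite basis_vec_eq (basis_vec_neq _ (nesym jk)) add0r lexx s0.
rewrite (basis_vec_neq _ ik) addr0; have [-> | ij] := pselect (i = j).
  by rewrite basis_vec_eq lexx s0.
by rewrite basis_vec_neq // lexx s0.
Qed.

Lemma opp_basis_vec_in_shifted_cube : shifted_cube s k (basis_vec k (- s)).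
Proof.
split=> [|i]; first exact: c0_basis_vec.
have [-> | ik] := pselect (i = k); first by rewrite !basis_vec_eq addNr lexx s0.
by rewrite !basis_vec_neq // addr0 lexx s0.
Qed.

End ShiftedCube.

Lemma twice_le_cover_diam U (s : R) :
  infinite_set [set: K] -> point_finite U -> 0 <= s ->
  (s%:E < lebesgue_number U)%E -> ((2 * s)%:E <= cover_diam U)%E.
Proof.
move=> Kinf Upf s0 sL.
have /choice [f Uf] k : exists A, U A /\ shifted_cube s k `<=` A.
  by apply: lebesgue_number_gt_sub sL _ (diam_shifted_cube k s0) => v [].
have [k1 [k2 [k12 f12]]] : exists k1 k2, k1 <> k2 /\ f k1 = f k2.
  apply: infinite_pigeonhole Kinf (Upf _ c0_zero) _ => k.
  by have [Ufk sub] := Uf k; split=> //; apply/sub/zero_in_shifted_cube.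
have [Uf1 sub1] := Uf k1; have [_ sub2] := Uf k2.
have in1 : f k1 (basis_vec k2 s) by apply/sub1/basis_vec_in_shifted_cube/nesym.
have in2 : f k1 (basis_vec k2 (- s)) by rewrite f12; apply/sub2/opp_basis_vec_in_shifted_cube.
apply: le_trans _ (diam_le_cover_diam Uf1).
apply: le_trans _ (coord_le_diam k2 in1 in2).
by rewrite !basis_vec_eq opprK lee_fin ger0_norm; lra.
Qed.

Section UpperBound.
Variables (r e : R).
Hypotheses (r0 : 0 <= r) (e0 : 0 < e).
(* [lra] ignores section hypotheses, hence the [have := e0] before some calls. *)

Definition slab (o : option (bool * nat)) (v : R) : Prop :=
  match o with
  | None => `|v| <= e + r
  | Some (b, n) => let a := e + n%:R * e in a <= (if b then v else - v) <= a + e + 2 * r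
  end.

Definition box (p : K -> option (bool * nat)) : set (K -> R) :=
  [set x | c0 x /\ forall k, slab (p k) (x k)].

Definition box_cover : set (set (K -> R)) := range box.

Definition slab_around (a : R) : option (bool * nat) :=
  Some (0 < a, Num.truncn ((`|a| - r - e) / e)).

Lemma slab_around_near a v : e + r < `|a| -> `|v - a| <= r -> slab (slab_around a) v.
Proof.
move=> ra va; set q := (`|a| - r - e) / e.
have /andP[nq qn] : (Num.truncn q)%:R <= q < (Num.truncn q).+1%:R.
  by apply: truncn_itv; rewrite divr_ge0 ?ltW //; lra.
move: nq qn; rewrite ler_pdivlMr // ltr_pdivrMr // -natr1 mulrDl mul1r => nq qn.
have ya : `|(if 0 < a then v else - v) - `|a| | <= r.
  case: ifPn => a0; first by rewrite (gtr0_norm a0).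
  by rewrite -leNgt in a0; rewrite (ler0_norm a0) -opprD normrN.
rewrite /=; move: ya; set y := (if _ then _ else _) => /[!ler_norml] /andP[ya1 ya2].
apply/andP; split; lra.
Qed.

Lemma slab_width o v w : slab o v -> slab o w -> `|v - w| <= 2 * r + 2 * e.
Proof.
rewrite ler_norml; case: o => [[[] n]|] /=; rewrite ?ler_norml;
  move=> /andP[v1 v2] /andP[w1 w2]; apply/andP; split; have := e0; lra.
Qed.

Lemma slab_some_norm b n v : slab (Some (b, n)) v -> e + n%:R * e <= `|v|.
Proof.
move=> /andP[vl _]; apply: le_trans vl _.
by case: b; [exact: ler_norm | rewrite -normrN; exact: ler_norm].
Qed.

Lemma finite_slabs v : finite_set [set o | slab o v].
Proof.
pose N := Num.truncn (`|v| / e).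
have : finite_set (None |` Some @` ([set: bool] `*` `I_N.+1)).
  rewrite finite_setU; split; first exact: finite_set1.
  by apply/finite_image/finite_setX; [exact: finite_finset | exact: finite_II].
apply: sub_finite_set => -[[b n] /slab_some_norm vbn|]; [right | by left].
exists (b, n) => //; split => //=.
rewrite ltnS truncn_ge_nat ?divr_ge0 ?(ltW e0) // ler_pdivlMr //.
by have := e0; lra.
Qed.

Lemma box_cover_diam : (cover_diam box_cover <= (2 * r + 2 * e)%:E)%E.
Proof.
apply/ereal_supP => _ [_ [p _ <-] <-].
apply: diam_le; first by rewrite addr_ge0 ?mulr_ge0 ?ler0n ?(ltW e0).
by move=> x y k [_ /(_ k) xk] [_ /(_ k) yk]; apply: slab_width xk yk.
Qed.

Lemma box_cover_sub E : E `<=` @c0 R K ->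
  (forall x y k, E x -> E y -> `|x k - y k| <= r) -> exists A, box_cover A /\ E `<=` A.
Proof.
move=> Ec Er.
have /choice [p Ep] k : exists o, forall y, E y -> slab o (y k).
  have [[x Ex xk] | Efar] := pselect (exists2 x, E x & e + r < `|x k|).
    by exists (slab_around (x k)) => y Ey; apply: slab_around_near xk (Er _ _ _ Ey Ex).
  by exists None => y Ey /=; rewrite leNgt; apply/negP => yk; apply: Efar; exists y.
by exists (box p); split=> [|y Ey]; [exists p | split=> [|k]; [exact: Ec | exact: Ep]].
Qed.

Lemma box_cover_is_cover : is_cover box_cover.
Proof.
split=> [_ [p _ <-] x [] //|x cx].
have [A [UA xA]] : exists A, box_cover A /\ [set x] `<=` A.
  by apply: box_cover_sub => [_ -> | _ _ k -> ->] //; rewrite subrr normr0.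
by exists A; split=> //; apply: xA.
Qed.

Lemma lebesgue_number_box_cover : (r%:E <= lebesgue_number box_cover)%E.
Proof. exact: le_lebesgue_number r0 box_cover_sub. Qed.

Lemma box_cover_point_finite : point_finite box_cover.
Proof.
move=> x cx.
have [s sE] : exists s : seq {classic K}, [set k | e / 2 < `|x k|] = [set` s].
  by apply/finite_seqP/cx; rewrite divr_gt0.
have pfin : finite_set [set p : K -> _ | forall k, slab (p k) (x k)].
  pose S (k : {classic K}) := [set o | slab o (x k)].
  apply: (@finite_set_funs_in _ _ s S None) => [k|k ks]; first exact: finite_slabs.
  case=> [[b n] /= /slab_some_norm xk|//]; suff : [set` s] k by move/negP: ks.
  rewrite -sE /=; have := mulr_ge0 (ler0n _ n) (ltW e0); have := e0; lra.
apply: (sub_finite_set _ (finite_image box pfin)) => A [[p _ <-] [_ xp]].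
by exists p.
Qed.

Lemma Delta_c_le : (Delta_c K r <= (2 * r + 2 * e)%:E)%E.
Proof.
apply: le_trans _ box_cover_diam; apply: ereal_inf_lbound; exists box_cover => //.
split; [exact: box_cover_is_cover | split; [exact: box_cover_point_finite |]].
exact: lebesgue_number_box_cover.
Qed.

End UpperBound.

End C0Covers.

Theorem corollary3p11 (R : realType) (K : Type) (hK : infinite_set [set: K]) :
  forall r : R, 0 <= r -> Delta_c K r = (2 * r)%:E.
Proof.
move=> r r0; apply/le_anti/andP; split.
  apply/lee_addgt0Pr => eps eps0.
  have e0 : 0 < eps / 2 by rewrite divr_gt0.
  apply: le_trans (Delta_c_le K r0 e0) _; rewrite -EFinD lee_fin; lra.
apply/ereal_infP => _ [U [Ucov [Upf UL]] <-].
move: r0; rewrite le_eqVlt => /predU1P[<- | r_gt0]; first by rewrite mulr0 cover_diam_ge0.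
apply/lee_mul01Pr => [|t /andP[t0 t1]]; first by rewrite lee_fin mulr_ge0 ?ltW.
rewrite -EFinM mulrCA; apply: twice_le_cover_diam hK Upf _ _.
- by rewrite mulr_ge0 ?ltW.
- by apply: lt_le_trans UL; rewrite lte_fin gtr_pMl.
Qed.
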